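(* Let $u$ be a sufficiently regular function on $\mathcal{K}_{[s_0,s_1]}$, let $0\le k\le p$ and let $Z^K$ be any composition, in any order, of $p-k$ partial derivatives $\partial_\alpha$ and $k$ boosts $L_a$. Then, with a constant $C$ depending only on $p$, for all $\alpha,\beta\in\{0,1,2\}$, $$(s/t)^2|\partial_\alpha\partial_\beta Z^Ku|\le C|\Box u|_{p,k}+Ct^{-1}|\partial u|_{p+1,k+1},$$ and $$(s/t)^2|\partial\partial u|_{p,k}\le C|\Box u|_{p,k}+Ct^{-1}|\partial u|_{p+1,k+1}.$$
   Context: Coordinates $(t,x)$, $r=|x|$, $s=\sqrt{t^2-r^2}$, $\Box=\partial_t^2-\partial_1^2-\partial_2^2$, $\partial_0=\partial_t$, $L_a=x^a\partial_t+t\partial_a$ ($a=1,2$). $\mathcal{K}_{[s_0,s_1]}=\{(t,x): t>r+1,\ s_0^2\le t^2-r^2\le s_1^2\}$. For a function $w$: $|w|_{p,k}:=\max|Z^Kw|$ over all compositions $Z^K$, in any order, of $i$ partial derivatives and $j$ boosts with $i+j\le p$, $j\le k$; $|\partial w|_{p,k}:=\max_\alpha|\partial_\alpha w|_{p,k}$; $|\partial\partial w|_{p,k}:=\max_{\alpha,\beta}|\partial_\alpha\partial_\beta w|_{p,k}$. *)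

From Stdlib Require Import Reals Lra List.
From Coquelicot Require Import Coquelicot.
Open Scope R_scope.

(* Functions on R^{1+2} are curried: w t x1 x2. *)
Definition fn3 := R -> R -> R -> R.

Inductive dir := Dt | Dx1 | Dx2.
Inductive bdir := B1 | B2.
Inductive vf := Pd (a : dir) | Bst (a : bdir).

Definition pd (a : dir) (w : fn3) : fn3 :=
  match a with
  | Dt  => fun t x y => Derive (fun s => w s x y) t
  | Dx1 => fun t x y => Derive (fun s => w t s y) x
  | Dx2 => fun t x y => Derive (fun s => w t x s) y
  end.

Definition boost (a : bdir) (w : fn3) : fn3 :=
  match a with
  | B1 => fun t x y => x * pd Dt w t x y + t * pd Dx1 w t x y
  | B2 => fun t x y => y * pd Dt w t x y + t * pd Dx2 w t x y
  end.

Definition apply_vf (z : vf) (w : fn3) : fn3 :=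
  match z with Pd a => pd a w | Bst a => boost a w end.

Definition applyZ (K : list vf) (w : fn3) : fn3 := fold_right apply_vf w K.

Definition is_boost (z : vf) : bool := match z with Bst _ => true | _ => false end.
Definition nboost (K : list vf) : nat := length (filter is_boost K).
Definition nder (K : list vf) : nat := length (filter (fun z => negb (is_boost z)) K).

Definition all_vf : list vf := Pd Dt :: Pd Dx1 :: Pd Dx2 :: Bst B1 :: Bst B2 :: nil.
Definition all_dir : list dir := Dt :: Dx1 :: Dx2 :: nil.

Fixpoint words (n : nat) : list (list vf) :=
  match n with
  | O => nil :: nil
  | S m => flat_map (fun K => map (fun z => z :: K) all_vf) (words m)
  end.

Definition admissible (p k : nat) : list (list vf) :=
  filter (fun K => Nat.leb (nboost K) k) (flat_map words (seq 0 (S p))).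

Definition maxR (l : list R) : R := fold_right Rmax 0 l.

Definition norm_pk (p k : nat) (w : fn3) (t x y : R) : R :=
  maxR (map (fun K => Rabs (applyZ K w t x y)) (admissible p k)).

Definition norm_d_pk (p k : nat) (w : fn3) (t x y : R) : R :=
  maxR (map (fun a => norm_pk p k (pd a w) t x y) all_dir).

Definition norm_dd_pk (p k : nat) (w : fn3) (t x y : R) : R :=
  maxR (flat_map (fun a => map (fun b => norm_pk p k (pd a (pd b w)) t x y) all_dir)
                 all_dir).

Definition box (w : fn3) : fn3 :=
  fun t x y => pd Dt (pd Dt w) t x y - pd Dx1 (pd Dx1 w) t x y - pd Dx2 (pd Dx2 w) t x y.

Definition rad (x y : R) : R := sqrt (x ^ 2 + y ^ 2).
Definition hyp_s (t x y : R) : R := sqrt (t ^ 2 - x ^ 2 - y ^ 2).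

Definition inK (s0 s1 t x y : R) : Prop :=
  t > rad x y + 1 /\ s0 ^ 2 <= t ^ 2 - rad x y ^ 2 <= s1 ^ 2.

Definition dist3 (t x y t' x' y' : R) : R :=
  Rmax (Rabs (t - t')) (Rmax (Rabs (x - x')) (Rabs (y - y'))).

Definition open3 (U : R -> R -> R -> Prop) : Prop :=
  forall t x y, U t x y -> exists d, 0 < d /\
    forall t' x' y', dist3 t x y t' x' y' < d -> U t' x' y'.

Definition continuous_on3 (U : R -> R -> R -> Prop) (w : fn3) : Prop :=
  forall t x y, U t x y -> forall eps, 0 < eps -> exists d, 0 < d /\
    forall t' x' y', dist3 t x y t' x' y' < d -> Rabs (w t' x' y' - w t x y) < eps.

Definition iter_pd (ds : list dir) (w : fn3) : fn3 := fold_right pd w ds.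

Definition smooth_on (U : R -> R -> R -> Prop) (w : fn3) : Prop :=
  forall ds : list dir,
    continuous_on3 U (iter_pd ds w) /\
    (forall t x y, U t x y ->
       ex_derive (fun s => iter_pd ds w s x y) t /\
       ex_derive (fun s => iter_pd ds w t s y) x /\
       ex_derive (fun s => iter_pd ds w t x s) y).

From Pilot Require Import Defs.
From Stdlib Require Import Reals List Lra Lia FunctionalExtensionality.
From Coquelicot Require Import Coquelicot.
Open Scope R_scope.

(* Write a1 = x1/t, a2 = x2/t.  Since t d_a = L_a - x^a d_t, every d_a d_b w equals
   -a_a d_t d_b w up to t^-1 |L d w|.  Inserting this into Box w = d_t^2 w - d_1^2 w - d_2^2 w
   gives (1 - a1^2 - a2^2) d_t^2 w = Box w + O(t^-1 |L d w|), and then all second derivatives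
   follow with the same weight (s/t)^2 = 1 - a1^2 - a2^2.  Apply this to w = Z^K u: Box
   commutes with every Z, and [d_c, L_a] is again a partial derivative, so L_a d_b Z^K u is
   controlled by |d u|_{p+1,k+1}; commuting the derivatives to the outside in the same way
   handles Z^K d d u.  Only existence of iterated partials and symmetry of mixed partials
   (Schwarz) are needed, and this class is closed under sums and products, hence boosts. *)

Definition coord (a : dir) : fn3 :=
  match a with Dt => fun t _ _ => t | Dx1 => fun _ x _ => x | Dx2 => fun _ _ y => y end.

Definition line (a : dir) (w : fn3) (t x y : R) : R -> R :=
  match a with
  | Dt => fun s => w s x y
  | Dx1 => fun s => w t s y
  | Dx2 => fun s => w t x s
  end.

Definition ex_pd (a : dir) (w : fn3) (t x y : R) : Prop :=
  ex_derive (line a w t x y) (coord a t x y).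

Lemma pd_line a w t x y : pd a w t x y = Derive (line a w t x y) (coord a t x y).
Proof. destruct a; reflexivity. Qed.

Definition lin3 (f : fn3) (c : R) (g : fn3) : fn3 := fun t x y => f t x y + c * g t x y.

Definition mul3 (f g : fn3) : fn3 := fun t x y => f t x y * g t x y.

Definition cst3 (c : R) : fn3 := fun _ _ _ => c.

Definition kronecker (a b : dir) : R :=
  match a, b with Dt, Dt | Dx1, Dx1 | Dx2, Dx2 => 1 | _, _ => 0 end.

Lemma line_lin a f c g t x y :
  line a (lin3 f c g) t x y = fun s => line a f t x y s + c * line a g t x y s.
Proof. destruct a; reflexivity. Qed.

Lemma line_mul a f g t x y :
  line a (mul3 f g) t x y = fun s => line a f t x y s * line a g t x y s.
Proof. destruct a; reflexivity. Qed.

Lemma ex_pd_lin a f c g t x y :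
  ex_pd a f t x y -> ex_pd a g t x y -> ex_pd a (lin3 f c g) t x y.
Proof.
  unfold ex_pd. rewrite line_lin. intros Hf Hg.
  apply (ex_derive_plus (line a f t x y) (fun s => c * line a g t x y s)); auto.
  apply ex_derive_scal, Hg.
Qed.

Lemma ex_pd_mul a f g t x y :
  ex_pd a f t x y -> ex_pd a g t x y -> ex_pd a (mul3 f g) t x y.
Proof. unfold ex_pd. rewrite line_mul. apply ex_derive_mult. Qed.

Lemma pd_lin a f c g t x y : ex_pd a f t x y -> ex_pd a g t x y ->
  pd a (lin3 f c g) t x y = lin3 (pd a f) c (pd a g) t x y.
Proof.
  unfold ex_pd. intros Hf Hg. unfold lin3 at 2. rewrite !pd_line, line_lin.
  rewrite (Derive_plus (line a f t x y) (fun s => c * line a g t x y s)), Derive_scal; auto.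
  apply ex_derive_scal, Hg.
Qed.

Lemma pd_mul a f g t x y : ex_pd a f t x y -> ex_pd a g t x y ->
  pd a (mul3 f g) t x y = lin3 (mul3 (pd a f) g) 1 (mul3 f (pd a g)) t x y.
Proof.
  unfold ex_pd. intros Hf Hg. rewrite pd_line, line_mul, Derive_mult by auto.
  unfold lin3, mul3. rewrite !pd_line. destruct a; simpl; ring.
Qed.

Lemma pd_cst a c : pd a (cst3 c) = cst3 0.
Proof.
  do 3 (apply functional_extensionality; intro). rewrite pd_line.
  destruct a; unfold line, cst3; apply Derive_const.
Qed.

Lemma pd_coord a b : pd a (coord b) = cst3 (kronecker a b).
Proof.
  do 3 (apply functional_extensionality; intro). rewrite pd_line.
  destruct a, b; unfold line, coord, cst3, kronecker; first [apply Derive_const | apply Derive_id].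
Qed.

Definition bdir_dir (a : bdir) : dir := match a with Defs.B1 => Dx1 | Defs.B2 => Dx2 end.

Lemma boost_lin a w :
  boost a w = lin3 (mul3 (coord (bdir_dir a)) (pd Dt w)) 1 (mul3 (coord Dt) (pd (bdir_dir a) w)).
Proof.
  do 3 (apply functional_extensionality; intro). destruct a; unfold lin3, mul3; simpl; ring.
Qed.

Lemma box_lin w : box w =
  lin3 (lin3 (pd Dt (pd Dt w)) (-1) (pd Dx1 (pd Dx1 w))) (-1) (pd Dx2 (pd Dx2 w)).
Proof. do 3 (apply functional_extensionality; intro). unfold box, lin3. ring. Qed.

Definition vf_comm (z : vf) (c : dir) : option dir :=
  match z, c with
  | Bst Defs.B1, Dt => Some Dx1 | Bst Defs.B1, Dx1 => Some Dt
  | Bst Defs.B2, Dt => Some Dx2 | Bst Defs.B2, Dx2 => Some Dt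
  | _, _ => None
  end.

Definition pd_opt (o : option dir) (w : fn3) : fn3 :=
  match o with Some c => pd c w | None => cst3 0 end.

Lemma applyZ_zero K : applyZ K (cst3 0) = cst3 0.
Proof.
  induction K as [|z K IH]; simpl; [reflexivity|]. rewrite IH.
  destruct z; simpl; [apply pd_cst|]. rewrite boost_lin, !pd_cst.
  do 3 (apply functional_extensionality; intro). unfold lin3, mul3, cst3. ring.
Qed.

Lemma applyZ_snoc K z w : applyZ (K ++ z :: nil) w = applyZ K (apply_vf z w).
Proof. apply fold_right_app. Qed.

Lemma maxR_ge l e : In e l -> e <= maxR l.
Proof.
  induction l as [|e' l IH]; simpl; [tauto|]. intros [<-|H].
  - apply Rmax_l.
  - eapply Rle_trans; [apply IH, H | apply Rmax_r].
Qed.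

Lemma maxR_nonneg l : 0 <= maxR l.
Proof. induction l; simpl; [lra|]. eapply Rle_trans; [eassumption | apply Rmax_r]. Qed.

Lemma maxR_scale_le l c B : 0 <= c -> 0 <= B -> (forall e, In e l -> c * e <= B) ->
  c * maxR l <= B.
Proof.
  intros Hc HB; induction l as [|e l IH]; simpl; intros H; [lra|].
  unfold Rmax. destruct (Rle_dec e (maxR l)); auto.
Qed.

Lemma words_length n K : In K (words n) -> length K = n.
Proof.
  revert K; induction n as [|n IH]; cbn [words]; intros K H.
  - destruct H as [<-|[]]; reflexivity.
  - apply in_flat_map in H. destruct H as [K0 [H0 HK]].
    apply in_map_iff in HK. destruct HK as [z [<- _]]. simpl. rewrite (IH K0 H0). reflexivity.
Qed.

Lemma in_words K : In K (words (length K)).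
Proof.
  induction K as [|z K IH]; cbn [length words]; [now left|].
  apply in_flat_map. exists K. split; [exact IH|]. apply (in_map (fun z0 => z0 :: K)).
  destruct z as [[]|[]]; simpl; tauto.
Qed.

Lemma in_admissible p k K : In K (admissible p k) <-> (length K <= p /\ nboost K <= k)%nat.
Proof.
  unfold admissible. rewrite filter_In, in_flat_map, Nat.leb_le. split.
  - intros [[n [Hn HK]] Hb]. apply in_seq in Hn. apply words_length in HK. lia.
  - intros [Hl Hb]. split; [|exact Hb]. exists (length K). split; [apply in_seq; lia|].
    apply in_words.
Qed.

Lemma length_nboost_nder K : length K = (nboost K + nder K)%nat.
Proof. induction K as [|[] K IH]; unfold nboost, nder in *; simpl; lia. Qed.

Lemma nboost_app K K' : nboost (K ++ K') = (nboost K + nboost K')%nat.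
Proof. unfold nboost. rewrite filter_app, length_app. reflexivity. Qed.

Lemma norm_pk_ge p k w t x y K : (length K <= p)%nat -> (nboost K <= k)%nat ->
  Rabs (applyZ K w t x y) <= norm_pk p k w t x y.
Proof.
  intros Hl Hb. apply maxR_ge, (in_map (fun K => Rabs (applyZ K w t x y))), in_admissible. auto.
Qed.

Lemma norm_d_pk_ge p k w t x y K c : (length K <= p)%nat -> (nboost K <= k)%nat ->
  Rabs (applyZ K (pd c w) t x y) <= norm_d_pk p k w t x y.
Proof.
  intros Hl Hb. eapply Rle_trans; [apply norm_pk_ge; eassumption|].
  apply maxR_ge, (in_map (fun c => norm_pk p k (pd c w) t x y)). destruct c; simpl; tauto.
Qed.

Lemma norm_dd_pk_scale_le p k w t x y c B : 0 <= c -> 0 <= B ->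
  (forall a b K, (length K <= p)%nat -> (nboost K <= k)%nat ->
     c * Rabs (applyZ K (pd a (pd b w)) t x y) <= B) ->
  c * norm_dd_pk p k w t x y <= B.
Proof.
  intros Hc HB H. apply maxR_scale_le; auto. intros e He.
  apply in_flat_map in He. destruct He as [a [_ He]]. apply in_map_iff in He.
  destruct He as [b [<- _]]. apply maxR_scale_le; auto. intros e He.
  apply in_map_iff in He. destruct He as [K [<- HK]]. apply in_admissible in HK.
  apply H; tauto.
Qed.

Definition word_le (K' K : list vf) : Prop :=
  (length K' <= length K)%nat /\ (nboost K' <= nboost K)%nat.

Lemma word_le_snoc K' K z : word_le K' K -> word_le (K' ++ z :: nil) (K ++ z :: nil).
Proof. unfold word_le. rewrite !length_app, !nboost_app. lia. Qed.

Lemma word_le_snoc_r K' K z : word_le K' K -> word_le K' (K ++ z :: nil).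
Proof. unfold word_le. rewrite length_app, nboost_app. lia. Qed.

Lemma word_le_cons K' K z : word_le K' K -> word_le K' (z :: K).
Proof. unfold word_le, nboost. destruct z; simpl; lia. Qed.

Lemma word_le_nil K : word_le nil K.
Proof. split; apply Nat.le_0_l. Qed.

Lemma applyZ_pd_opt_le K o v t x y B : 0 <= B ->
  (forall c, Rabs (applyZ K (pd c v) t x y) <= B) -> Rabs (applyZ K (pd_opt o v) t x y) <= B.
Proof.
  intros HB H. destruct o; simpl; [apply H|].
  rewrite applyZ_zero. unfold cst3. rewrite Rabs_R0. exact HB.
Qed.

(** * Second derivatives against boosts: the algebra *)

Lemma weighted_chain_le s a m X Y E : 0 <= s <= 1 -> Rabs a <= 1 ->
  Rabs (Y + a * X) <= m -> s * Rabs X <= E -> s * Rabs Y <= E + m.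
Proof.
  intros Hs Ha HY HX.
  rewrite <- (Rabs_pos_eq s) by lra. rewrite <- Rabs_mult.
  replace (s * Y) with (s * (Y + a * X) - a * (s * X)) by ring.
  eapply Rle_trans; [apply Rabs_triang|].
  rewrite Rabs_Ropp, !Rabs_mult, (Rabs_pos_eq s) by lra.
  assert (0 <= (1 - s) * Rabs (Y + a * X)) by (apply Rmult_le_pos; [lra | apply Rabs_pos]).
  assert (0 <= (1 - Rabs a) * (s * Rabs X))
    by (apply Rmult_le_pos; [lra | apply Rmult_le_pos; [lra | apply Rabs_pos]]).
  nra.
Qed.

Lemma weighted_hessian_le a1 a2 m wtt wt1 wt2 w11 w12 w22 :
  a1 ^ 2 + a2 ^ 2 <= 1 ->
  Rabs (wt1 + a1 * wtt) <= m -> Rabs (wt2 + a2 * wtt) <= m ->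
  Rabs (w11 + a1 * wt1) <= m -> Rabs (w12 + a1 * wt2) <= m -> Rabs (w22 + a2 * wt2) <= m ->
  forall X, In X (wtt :: wt1 :: wt2 :: w11 :: w12 :: w22 :: nil) ->
  (1 - a1 ^ 2 - a2 ^ 2) * Rabs X <= Rabs (wtt - w11 - w22) + 6 * m.
Proof.
  intros Ha h1 h2 h3 h4 h5.
  set (s := 1 - a1 ^ 2 - a2 ^ 2).
  assert (Hs : 0 <= s <= 1) by (unfold s; nra).
  assert (Ha1 : Rabs a1 <= 1) by (apply Rabs_le; nra).
  assert (Ha2 : Rabs a2 <= 1) by (apply Rabs_le; nra).
  assert (m0 : 0 <= m) by (eapply Rle_trans; [apply Rabs_pos | exact h1]).
  assert (Htt : s * Rabs wtt <= Rabs (wtt - w11 - w22) + 4 * m).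
  { (* s wtt = (wtt - w11 - w22) + (w11 + a1 wt1) + (w22 + a2 wt2)
               - a1 (wt1 + a1 wtt) - a2 (wt2 + a2 wtt) *)
    assert (k1 : Rabs (a1 * (wt1 + a1 * wtt)) <= m).
    { rewrite Rabs_mult. pose proof (Rabs_pos (wt1 + a1 * wtt)). nra. }
    assert (k2 : Rabs (a2 * (wt2 + a2 * wtt)) <= m).
    { rewrite Rabs_mult. pose proof (Rabs_pos (wt2 + a2 * wtt)). nra. }
    assert (k0 := Rle_refl (Rabs (wtt - w11 - w22))).
    apply Rabs_le_between in k0, k1, k2, h3, h5.
    rewrite <- (Rabs_pos_eq s), <- Rabs_mult by lra.
    apply Rabs_le. unfold s. lra. }
  assert (Ht1 := weighted_chain_le s a1 m wtt wt1 _ Hs Ha1 h1 Htt).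
  assert (Ht2 := weighted_chain_le s a2 m wtt wt2 _ Hs Ha2 h2 Htt).
  assert (H11 := weighted_chain_le s a1 m wt1 w11 _ Hs Ha1 h3 Ht1).
  assert (H12 := weighted_chain_le s a1 m wt2 w12 _ Hs Ha1 h4 Ht2).
  assert (H22 := weighted_chain_le s a2 m wt2 w22 _ Hs Ha2 h5 Ht2).
  intros X HX. simpl in HX. decompose [or] HX; try contradiction; subst; lra.
Qed.

(** * Regular functions on an open set *)

Definition eq_on (U : R -> R -> R -> Prop) (f g : fn3) : Prop :=
  forall t x y, U t x y -> f t x y = g t x y.

Definition diff_on (U : R -> R -> R -> Prop) (w : fn3) : Prop :=
  forall t x y, U t x y -> forall a, ex_pd a w t x y.

Definition sym_on (U : R -> R -> R -> Prop) (w : fn3) : Prop :=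
  forall t x y, U t x y -> forall a b, pd a (pd b w) t x y = pd b (pd a w) t x y.

Fixpoint regular_upto (U : R -> R -> R -> Prop) (n : nat) (w : fn3) : Prop :=
  diff_on U w /\ sym_on U w /\
  forall a, match n with
            | O => diff_on U (pd a w)
            | S m => regular_upto U m (pd a w)
            end.

Definition regular (U : R -> R -> R -> Prop) (w : fn3) : Prop :=
  forall n, regular_upto U n w.

Lemma iter_pd_app ds ds' w : iter_pd (ds ++ ds') w = iter_pd ds (iter_pd ds' w).
Proof. apply fold_right_app. Qed.

Lemma smooth_on_iter_pd U ds w : smooth_on U w -> smooth_on U (iter_pd ds w).
Proof. intros Hs ds'. rewrite <- iter_pd_app. apply Hs. Qed.

Lemma smooth_on_diff U w : smooth_on U w -> diff_on U w.
Proof. intros Hs t x y H []; apply (proj2 (Hs nil) t x y H). Qed.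

Lemma dist3_lt t x y t' x' y' d :
  Rabs (t' - t) < d -> Rabs (x' - x) < d -> Rabs (y' - y) < d -> dist3 t x y t' x' y' < d.
Proof.
  intros. unfold dist3. rewrite (Rabs_minus_sym t), (Rabs_minus_sym x), (Rabs_minus_sym y).
  repeat apply Rmax_lub_lt; assumption.
Qed.

Lemma Rabs_minus_diag_lt z d : 0 < d -> Rabs (z - z) < d.
Proof. intros; rewrite Rminus_eq_0, Rabs_R0; assumption. Qed.

Lemma continuity_2d_slices U f t x y : continuous_on3 U f -> U t x y ->
  continuity_2d_pt (fun u v => f u v y) t x /\ continuity_2d_pt (fun u v => f u x v) t y /\
  continuity_2d_pt (fun u v => f t u v) x y.
Proof.
  intros Hc H. repeat split; intros eps; destruct (Hc t x y H eps (cond_pos eps)) as [d [Hd Hb]];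
  exists (mkposreal d Hd); intros u v hu hv; apply Hb, dist3_lt;
  auto using Rabs_minus_diag_lt.
Qed.

Section OpenSet.

Variable U : R -> R -> R -> Prop.
Hypothesis HU : open3 U.

Lemma eq_on_locally a f g t x y : eq_on U f g -> U t x y ->
  locally (coord a t x y) (fun s => line a f t x y s = line a g t x y s).
Proof.
  intros Hfg H. destruct (HU t x y H) as [d [Hd Hb]].
  exists (mkposreal d Hd); intros s Hs; destruct a; apply Hfg, Hb, dist3_lt;
    auto using Rabs_minus_diag_lt.
Qed.

Lemma pd_eq_on a f g : eq_on U f g -> eq_on U (pd a f) (pd a g).
Proof.
  intros Hfg t x y H. rewrite !pd_line. apply Derive_ext_loc, eq_on_locally; assumption.
Qed.

Lemma ex_pd_eq_on a f g t x y : eq_on U f g -> U t x y -> ex_pd a f t x y -> ex_pd a g t x y.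
Proof.
  intros Hfg H. apply ex_derive_ext_loc, eq_on_locally; assumption.
Qed.

Lemma diff_on_eq_on f g : eq_on U f g -> diff_on U f -> diff_on U g.
Proof. intros Hfg Hf t x y H a. apply (ex_pd_eq_on a f); auto. Qed.

Lemma sym_on_eq_on f g : eq_on U f g -> sym_on U f -> sym_on U g.
Proof.
  intros Hfg Hf t x y H a b.
  rewrite <- (pd_eq_on a _ _ (pd_eq_on b f g Hfg)), <- (pd_eq_on b _ _ (pd_eq_on a f g Hfg))
    by exact H.
  auto.
Qed.

Lemma regular_upto_eq_on n : forall f g, eq_on U f g -> regular_upto U n f -> regular_upto U n g.
Proof.
  induction n as [|n IH]; intros f g Hfg (Hd & Hs & Hp); repeat split.
  all: try (eapply diff_on_eq_on; eassumption); try (eapply sym_on_eq_on; eassumption).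
  - intro a. apply (diff_on_eq_on (pd a f)); auto using pd_eq_on.
  - intro a. apply (IH (pd a f)); auto using pd_eq_on.
Qed.

Lemma boost_eq_on a f g : eq_on U f g -> eq_on U (boost a f) (boost a g).
Proof.
  intros Hfg t x y H.
  destruct a; unfold boost; rewrite !(pd_eq_on _ f g Hfg t x y H); reflexivity.
Qed.

Lemma apply_vf_eq_on z f g : eq_on U f g -> eq_on U (apply_vf z f) (apply_vf z g).
Proof. destruct z; [apply pd_eq_on | apply boost_eq_on]. Qed.

Lemma applyZ_eq_on K f g : eq_on U f g -> eq_on U (applyZ K f) (applyZ K g).
Proof. intros Hfg; induction K; simpl; auto using apply_vf_eq_on. Qed.

Lemma diff_on_lin f c g : diff_on U f -> diff_on U g -> diff_on U (lin3 f c g).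
Proof. intros Hf Hg t x y H a. apply ex_pd_lin; auto. Qed.

Lemma diff_on_mul f g : diff_on U f -> diff_on U g -> diff_on U (mul3 f g).
Proof. intros Hf Hg t x y H a. apply ex_pd_mul; auto. Qed.

Lemma pd_lin_on a f c g : diff_on U f -> diff_on U g ->
  eq_on U (pd a (lin3 f c g)) (lin3 (pd a f) c (pd a g)).
Proof. intros Hf Hg t x y H. apply pd_lin; auto. Qed.

Lemma pd_mul_on a f g : diff_on U f -> diff_on U g ->
  eq_on U (pd a (mul3 f g)) (lin3 (mul3 (pd a f) g) 1 (mul3 f (pd a g))).
Proof. intros Hf Hg t x y H. apply pd_mul; auto. Qed.

Lemma regular_upto_diff_pd n w : regular_upto U n w -> forall a, diff_on U (pd a w).
Proof. destruct n; intros (_ & _ & H) a; [apply H | destruct n; exact (proj1 (H a))]. Qed.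

Lemma sym_on_lin f c g :
  diff_on U f -> diff_on U g -> (forall b, diff_on U (pd b f)) -> (forall b, diff_on U (pd b g)) ->
  sym_on U f -> sym_on U g -> sym_on U (lin3 f c g).
Proof.
  intros Hf Hg Hf' Hg' Sf Sg t x y H a b.
  assert (E : forall a b, pd a (pd b (lin3 f c g)) t x y =
                          lin3 (pd a (pd b f)) c (pd a (pd b g)) t x y).
  { intros a' b'. rewrite (pd_eq_on a' _ _ (pd_lin_on b' f c g Hf Hg)) by exact H.
    apply pd_lin; [apply Hf' | apply Hg']; exact H. }
  rewrite !E. unfold lin3. rewrite Sf, Sg by exact H. reflexivity.
Qed.

Lemma sym_on_mul f g :
  diff_on U f -> diff_on U g -> (forall b, diff_on U (pd b f)) -> (forall b, diff_on U (pd b g)) ->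
  sym_on U f -> sym_on U g -> sym_on U (mul3 f g).
Proof.
  intros Hf Hg Hf' Hg' Sf Sg t x y H a b.
  assert (Ef : forall a, ex_pd a f t x y) by (apply Hf, H).
  assert (Eg : forall a, ex_pd a g t x y) by (apply Hg, H).
  assert (Ef' : forall a b, ex_pd a (pd b f) t x y) by (intros; apply Hf', H).
  assert (Eg' : forall a b, ex_pd a (pd b g) t x y) by (intros; apply Hg', H).
  assert (E : forall a b, pd a (pd b (mul3 f g)) t x y =
    pd a (pd b f) t x y * g t x y + pd b f t x y * pd a g t x y
    + pd a f t x y * pd b g t x y + f t x y * pd a (pd b g) t x y).
  { intros a' b'. rewrite (pd_eq_on a' _ _ (pd_mul_on b' f g Hf Hg)) by exact H.
    rewrite pd_lin by (apply ex_pd_mul; auto).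
    unfold lin3. rewrite !pd_mul by auto. unfold lin3, mul3. ring. }
  rewrite !E, Sf, Sg by exact H. ring.
Qed.

Lemma regular_upto_lin n : forall f c g,
  regular_upto U n f -> regular_upto U n g -> regular_upto U n (lin3 f c g).
Proof.
  induction n as [|n IH]; intros f c g Hf Hg;
  pose proof (regular_upto_diff_pd _ _ Hf) as Hf';
  pose proof (regular_upto_diff_pd _ _ Hg) as Hg';
  destruct Hf as (Df & Sf & Pf), Hg as (Dg & Sg & Pg);
  (split; [|split]); auto using diff_on_lin, sym_on_lin; intro a.
  - apply (diff_on_eq_on (lin3 (pd a f) c (pd a g))).
    + intros t x y H. symmetry. apply pd_lin_on; auto.
    + apply diff_on_lin; auto.
  - apply (regular_upto_eq_on n (lin3 (pd a f) c (pd a g))).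
    + intros t x y H. symmetry. apply pd_lin_on; auto.
    + apply IH; auto.
Qed.

Lemma regular_lin f c g : regular U f -> regular U g -> regular U (lin3 f c g).
Proof. intros Hf Hg n. apply regular_upto_lin; auto. Qed.

Lemma regular_pd a w : regular U w -> regular U (pd a w).
Proof. intros Hw n. exact (proj2 (proj2 (Hw (S n))) a). Qed.

Lemma regular_diff w : regular U w -> diff_on U w.
Proof. intros Hw. exact (proj1 (Hw O)). Qed.

Lemma regular_sym w : regular U w -> sym_on U w.
Proof. intros Hw. exact (proj1 (proj2 (Hw O))). Qed.

Lemma regular_ex_pd a w t x y : regular U w -> U t x y -> ex_pd a w t x y.
Proof. intros Hw H. exact (regular_diff w Hw t x y H a). Qed.

Lemma regular_mul f g : regular U f -> regular U g -> regular U (mul3 f g).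
Proof.
  intros Hf Hg n. revert f g Hf Hg.
  induction n as [|n IH]; intros f g Hf Hg;
  (split; [|split]);
  auto using diff_on_mul, sym_on_mul, regular_diff, regular_sym, regular_pd; intro a;
  [ apply (diff_on_eq_on (lin3 (mul3 (pd a f) g) 1 (mul3 f (pd a g))))
  | apply (regular_upto_eq_on n (lin3 (mul3 (pd a f) g) 1 (mul3 f (pd a g)))) ];
  try (intros t x y H; symmetry; apply pd_mul_on; auto using regular_diff).
  - apply diff_on_lin; apply diff_on_mul; auto using regular_diff, regular_pd.
  - apply regular_upto_lin; apply IH; auto using regular_pd.
Qed.

Lemma regular_cst c : regular U (cst3 c).
Proof.
  assert (D : forall c, diff_on U (cst3 c))
    by (intros c' t x y _ []; cbv [ex_pd line coord cst3]; apply ex_derive_const).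
  intros n; revert c; induction n; intro c; repeat split; auto;
  try (intros t x y _ a b; rewrite !pd_cst; reflexivity); intro a; rewrite pd_cst; auto.
Qed.

Lemma regular_coord b : regular U (coord b).
Proof.
  assert (D : diff_on U (coord b)).
  { intros t x y _ []; destruct b; cbv [ex_pd line coord];
      first [apply ex_derive_const | apply ex_derive_id]. }
  assert (S : sym_on U (coord b)).
  { intros t x y _ a c. rewrite !pd_coord, !pd_cst. reflexivity. }
  intros [|n]; repeat split; auto; intro a; rewrite pd_coord;
    [apply regular_diff|]; apply regular_cst.
Qed.

Lemma locally_2d_slices t x y : U t x y ->
  locally_2d (fun u v => U u v y) t x /\ locally_2d (fun u v => U u x v) t y /\
  locally_2d (fun u v => U t u v) x y.
Proof.
  intros H. destruct (HU t x y H) as [d [Hd Hb]].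
  repeat split; exists (mkposreal d Hd); intros u v hu hv; apply Hb, dist3_lt;
  auto using Rabs_minus_diag_lt.
Qed.

Lemma sym_on_smooth w : smooth_on U w -> sym_on U w.
Proof.
  intros Hs t x y H.
  assert (D : forall ds, diff_on U (iter_pd ds w))
    by (intro ds; apply smooth_on_diff, smooth_on_iter_pd, Hs).
  assert (C : forall ds, continuous_on3 U (iter_pd ds w)) by (intro ds; apply Hs).
  destruct (locally_2d_slices t x y H) as (L01 & L02 & L12).
  assert (S01 : pd Dt (pd Dx1 w) t x y = pd Dx1 (pd Dt w) t x y).
  { apply (Schwarz (fun u v => w u v y)).
    - eapply locally_2d_impl; [apply locally_2d_forall | exact L01].
      intros u v Huv. repeat split;
        [apply (D nil _ _ _ Huv Dt) | apply (D nil _ _ _ Huv Dx1)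
        | apply (D (Dx1 :: nil) _ _ _ Huv Dt) | apply (D (Dt :: nil) _ _ _ Huv Dx1)].
    - apply (continuity_2d_slices U (iter_pd (Dt :: Dx1 :: nil) w) t x y (C _) H).
    - apply (continuity_2d_slices U (iter_pd (Dx1 :: Dt :: nil) w) t x y (C _) H). }
  assert (S02 : pd Dt (pd Dx2 w) t x y = pd Dx2 (pd Dt w) t x y).
  { apply (Schwarz (fun u v => w u x v)).
    - eapply locally_2d_impl; [apply locally_2d_forall | exact L02].
      intros u v Huv. repeat split;
        [apply (D nil _ _ _ Huv Dt) | apply (D nil _ _ _ Huv Dx2)
        | apply (D (Dx2 :: nil) _ _ _ Huv Dt) | apply (D (Dt :: nil) _ _ _ Huv Dx2)].
    - apply (continuity_2d_slices U (iter_pd (Dt :: Dx2 :: nil) w) t x y (C _) H).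
    - apply (continuity_2d_slices U (iter_pd (Dx2 :: Dt :: nil) w) t x y (C _) H). }
  assert (S12 : pd Dx1 (pd Dx2 w) t x y = pd Dx2 (pd Dx1 w) t x y).
  { apply (Schwarz (fun u v => w t u v)).
    - eapply locally_2d_impl; [apply locally_2d_forall | exact L12].
      intros u v Huv. repeat split;
        [apply (D nil _ _ _ Huv Dx1) | apply (D nil _ _ _ Huv Dx2)
        | apply (D (Dx2 :: nil) _ _ _ Huv Dx1) | apply (D (Dx1 :: nil) _ _ _ Huv Dx2)].
    - apply (continuity_2d_slices U (iter_pd (Dx1 :: Dx2 :: nil) w) t x y (C _) H).
    - apply (continuity_2d_slices U (iter_pd (Dx2 :: Dx1 :: nil) w) t x y (C _) H). }
  intros [] []; auto.
Qed.

Lemma regular_of_smooth_on u : smooth_on U u -> regular U u.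
Proof.
  intros Hs n. revert u Hs. induction n; intros u Hs; repeat split;
    auto using smooth_on_diff, sym_on_smooth; intro a;
    [apply smooth_on_diff | apply IHn]; exact (smooth_on_iter_pd U (a :: nil) u Hs).
Qed.

Lemma regular_boost a w : regular U w -> regular U (boost a w).
Proof.
  intros Hw. rewrite boost_lin.
  apply regular_lin; apply regular_mul; auto using regular_coord, regular_pd.
Qed.

Lemma regular_apply_vf z w : regular U w -> regular U (apply_vf z w).
Proof. destruct z; simpl; auto using regular_pd, regular_boost. Qed.

Lemma regular_applyZ K w : regular U w -> regular U (applyZ K w).
Proof. intros Hw; induction K; simpl; auto using regular_apply_vf. Qed.

Lemma regular_pd_opt o w : regular U w -> regular U (pd_opt o w).
Proof. destruct o; simpl; auto using regular_pd, regular_cst. Qed.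

(** * Commutators *)

Lemma pd_apply_vf c z w : regular U w ->
  eq_on U (pd c (apply_vf z w)) (lin3 (apply_vf z (pd c w)) 1 (pd_opt (vf_comm z c) w)).
Proof.
  intros Hw t x y H. pose proof (regular_sym w Hw t x y H) as Sw.
  destruct z as [g|a]; simpl.
  - rewrite Sw. unfold lin3, cst3. ring.
  - assert (Dw : forall b a, ex_pd a (pd b w) t x y)
      by (intros; apply regular_ex_pd; auto using regular_pd).
    assert (Dc : forall a b, ex_pd a (coord b) t x y)
      by (intros; apply regular_ex_pd; auto using regular_coord).
    rewrite !boost_lin, pd_lin by (apply ex_pd_mul; auto).
    unfold lin3 at 1. rewrite !pd_mul, !pd_coord by auto.
    cbv [lin3 mul3]. rewrite (Sw c Dt), (Sw c (bdir_dir a)).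
    destruct a, c; cbv [cst3 kronecker bdir_dir vf_comm pd_opt coord]; ring.
Qed.

Lemma apply_vf_lin z f c g : diff_on U f -> diff_on U g ->
  eq_on U (apply_vf z (lin3 f c g)) (lin3 (apply_vf z f) c (apply_vf z g)).
Proof.
  intros Hf Hg t x y H. destruct z as [b|a]; simpl; [apply pd_lin_on; auto|].
  unfold boost. destruct a; rewrite !(pd_lin_on _ _ _ _ Hf Hg t x y H); unfold lin3; ring.
Qed.

Lemma applyZ_lin K f c g : regular U f -> regular U g ->
  eq_on U (applyZ K (lin3 f c g)) (lin3 (applyZ K f) c (applyZ K g)).
Proof.
  intros Hf Hg. induction K as [|z K IH]; simpl; intros t x y H; [reflexivity|].
  rewrite (apply_vf_eq_on z _ _ IH t x y H).
  apply apply_vf_lin; auto using regular_diff, regular_applyZ.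
Qed.

Lemma pd2_apply_vf b z w t x y : regular U w -> U t x y ->
  pd b (pd b (apply_vf z w)) t x y =
  apply_vf z (pd b (pd b w)) t x y + pd_opt (vf_comm z b) (pd b w) t x y
  + pd b (pd_opt (vf_comm z b) w) t x y.
Proof.
  intros Hw H.
  rewrite (pd_eq_on b _ _ (pd_apply_vf b z w Hw)) by exact H.
  rewrite pd_lin by (apply regular_diff; auto using regular_apply_vf, regular_pd_opt, regular_pd).
  unfold lin3. rewrite (pd_apply_vf b z (pd b w)) by auto using regular_pd.
  unfold lin3. ring.
Qed.

Lemma box_apply_vf z w : regular U w -> eq_on U (box (apply_vf z w)) (apply_vf z (box w)).
Proof.
  intros Hw t x y H. pose proof (regular_sym w Hw t x y H) as Sw.
  assert (Dw : forall a b, diff_on U (pd a (pd b w))) by auto using regular_diff, regular_pd.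
  rewrite (box_lin w),
    (apply_vf_lin z _ _ _ (diff_on_lin _ _ _ (Dw Dt Dt) (Dw Dx1 Dx1)) (Dw Dx2 Dx2) t x y H).
  unfold lin3 at 1. rewrite (apply_vf_lin z _ _ _ (Dw Dt Dt) (Dw Dx1 Dx1) t x y H).
  unfold box, lin3. rewrite !pd2_apply_vf by auto.
  destruct z as [c|[]]; cbv [vf_comm pd_opt]; rewrite ?pd_cst; unfold cst3;
    rewrite ?(Sw Dx1 Dt), ?(Sw Dx2 Dt); ring.
Qed.

Lemma box_applyZ K u : regular U u -> eq_on U (applyZ K (box u)) (box (applyZ K u)).
Proof.
  intros Hu. induction K as [|z K IH]; simpl; intros t x y H; [reflexivity|].
  rewrite (apply_vf_eq_on z _ _ IH t x y H).
  symmetry. apply box_apply_vf; auto using regular_applyZ.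
Qed.

Lemma applyZ_pd_apply_vf K c z v : regular U v ->
  eq_on U (applyZ K (pd c (apply_vf z v)))
          (lin3 (applyZ (K ++ z :: nil) (pd c v)) 1 (applyZ K (pd_opt (vf_comm z c) v))).
Proof.
  intros Hv t x y H. rewrite applyZ_snoc.
  rewrite (applyZ_eq_on K _ _ (pd_apply_vf c z v Hv)) by exact H.
  apply applyZ_lin; auto using regular_apply_vf, regular_pd, regular_pd_opt.
Qed.

(* Each letter of the word contributes one commutator, itself a partial derivative. *)
Lemma pd_applyZ_le K : forall v b B t x y, regular U v -> U t x y ->
  (forall c K', word_le K' K -> Rabs (applyZ K' (pd c v) t x y) <= B) ->
  Rabs (pd b (applyZ K v) t x y) <= 2 ^ length K * B.
Proof.
  induction K as [|z K IH] using rev_ind; intros v b B t x y Hv H HB.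
  - simpl. rewrite Rmult_1_l. exact (HB b nil (word_le_nil nil)).
  - assert (B0 : 0 <= B) by (eapply Rle_trans; [apply Rabs_pos | apply (HB b nil), word_le_nil]).
    rewrite applyZ_snoc, length_app, pow_add. simpl (2 ^ length (z :: nil)).
    replace (2 ^ length K * (2 * 1) * B) with (2 ^ length K * (2 * B)) by ring.
    apply IH; auto using regular_apply_vf. intros c K' HK'.
    rewrite (applyZ_pd_apply_vf K' c z v Hv t x y H). unfold lin3.
    eapply Rle_trans; [apply Rabs_triang|]. rewrite Rmult_1_l.
    assert (Rabs (applyZ (K' ++ z :: nil) (pd c v) t x y) <= B) by auto using word_le_snoc.
    assert (Rabs (applyZ K' (pd_opt (vf_comm z c) v) t x y) <= B)
      by (apply applyZ_pd_opt_le; auto using word_le_snoc_r).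
    lra.
Qed.

Lemma applyZ_pd_le P K : forall v b B t x y, regular U v -> U t x y ->
  (forall c K', word_le K' K -> Rabs (applyZ P (pd c (applyZ K' v)) t x y) <= B) ->
  Rabs (applyZ (P ++ K) (pd b v) t x y) <= 2 ^ length K * B.
Proof.
  induction K as [|z K IH] using rev_ind; intros v b B t x y Hv H HB.
  - rewrite app_nil_r. simpl. rewrite Rmult_1_l. exact (HB b nil (word_le_nil nil)).
  - assert (B0 : 0 <= B) by (eapply Rle_trans; [apply Rabs_pos | apply (HB b nil), word_le_nil]).
    rewrite app_assoc, length_app, pow_add. simpl (2 ^ length (z :: nil)).
    pose proof (applyZ_pd_apply_vf (P ++ K) b z v Hv t x y H) as E. unfold lin3 in E.
    replace (applyZ ((P ++ K) ++ z :: nil) (pd b v) t x y)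
      with (applyZ (P ++ K) (pd b (apply_vf z v)) t x y
            - applyZ (P ++ K) (pd_opt (vf_comm z b) v) t x y) by lra.
    eapply Rle_trans; [apply Rabs_triang|]. rewrite Rabs_Ropp.
    assert (Rabs (applyZ (P ++ K) (pd b (apply_vf z v)) t x y) <= 2 ^ length K * B).
    { apply IH; auto using regular_apply_vf. intros c K' HK'.
      rewrite <- applyZ_snoc. auto using word_le_snoc. }
    assert (Rabs (applyZ (P ++ K) (pd_opt (vf_comm z b) v) t x y) <= 2 ^ length K * B).
    { apply applyZ_pd_opt_le; [apply Rmult_le_pos; [apply pow_le; lra | exact B0]|].
      intro c. apply IH; auto using word_le_snoc_r. }
    lra.
Qed.

(** * The weighted estimate *)

Lemma weighted_hessian_le_boost w t x y M : regular U w -> U t x y -> 0 < t ->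
  x ^ 2 + y ^ 2 <= t ^ 2 -> (forall a b, Rabs (boost a (pd b w) t x y) <= M) ->
  forall a b, (1 - (x / t) ^ 2 - (y / t) ^ 2) * Rabs (pd a (pd b w) t x y)
              <= Rabs (box w t x y) + 6 * (M / t).
Proof.
  intros Hw H Ht Hr HM a b. pose proof (regular_sym w Hw t x y H) as Sw.
  assert (Hdiv : forall u v z, Rabs (z * v + t * u) <= M -> Rabs (u + z / t * v) <= M / t).
  { intros u v z Huv. replace (u + z / t * v) with ((z * v + t * u) / t) by (field; lra).
    unfold Rdiv. rewrite Rabs_mult, (Rabs_pos_eq (/ t)) by (apply Rlt_le, Rinv_0_lt_compat, Ht).
    apply Rmult_le_compat_r; [apply Rlt_le, Rinv_0_lt_compat, Ht | exact Huv]. }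
  apply (weighted_hessian_le (x / t) (y / t) (M / t) (pd Dt (pd Dt w) t x y)
           (pd Dx1 (pd Dt w) t x y) (pd Dx2 (pd Dt w) t x y) (pd Dx1 (pd Dx1 w) t x y)
           (pd Dx1 (pd Dx2 w) t x y) (pd Dx2 (pd Dx2 w) t x y)).
  - replace ((x / t) ^ 2 + (y / t) ^ 2) with ((x ^ 2 + y ^ 2) / t ^ 2) by (field; lra).
    unfold Rdiv. rewrite <- (Rinv_r (t ^ 2)) by (apply pow_nonzero; lra).
    apply Rmult_le_compat_r; [apply Rlt_le, Rinv_0_lt_compat, pow_lt, Ht | exact Hr].
  - apply Hdiv, (HM Defs.B1 Dt).
  - apply Hdiv, (HM Defs.B2 Dt).
  - apply Hdiv. rewrite <- (Sw Dt Dx1). apply (HM Defs.B1 Dx1).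
  - apply Hdiv. rewrite <- (Sw Dt Dx2). apply (HM Defs.B1 Dx2).
  - apply Hdiv. rewrite <- (Sw Dt Dx2). apply (HM Defs.B2 Dx2).
  - destruct a, b; rewrite ?(Sw Dt Dx1), ?(Sw Dt Dx2), ?(Sw Dx2 Dx1); simpl; tauto.
Qed.

Lemma boost_pd_applyZ_le u K a b t x y B : regular U u -> U t x y ->
  (forall c K', word_le K' (Bst a :: K) -> Rabs (applyZ K' (pd c u) t x y) <= B) ->
  Rabs (boost a (pd b (applyZ K u)) t x y) <= 3 * 2 ^ length K * B.
Proof.
  intros Hu H HB.
  assert (B0 : 0 <= B) by (eapply Rle_trans; [apply Rabs_pos | apply (HB b nil), word_le_nil]).
  assert (HK : forall c, Rabs (pd c (applyZ K u) t x y) <= 2 ^ length K * B).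
  { intro c. apply pd_applyZ_le; auto. intros c' K' HK'. apply HB, word_le_cons, HK'. }
  pose proof (pd_apply_vf b (Bst a) (applyZ K u) (regular_applyZ K u Hu) t x y H) as E.
  pose proof (pd_applyZ_le (Bst a :: K) u b B t x y Hu H HB) as E1.
  assert (E2 : Rabs (pd_opt (vf_comm (Bst a) b) (applyZ K u) t x y) <= 2 ^ length K * B)
    by (apply (applyZ_pd_opt_le nil); [apply Rmult_le_pos; [apply pow_le; lra | exact B0]|];
        exact HK).
  change (applyZ (Bst a :: K) u) with (boost a (applyZ K u)) in E1.
  unfold lin3 in E. cbn [apply_vf] in E. cbn [length pow] in E1.
  replace (boost a (pd b (applyZ K u)) t x y)
    with (pd b (boost a (applyZ K u)) t x y - pd_opt (vf_comm (Bst a) b) (applyZ K u) t x y)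
    by lra.
  eapply Rle_trans; [apply Rabs_triang|]. rewrite Rabs_Ropp. lra.
Qed.

Lemma applyZ_pd2_le u K a b t x y s B : regular U u -> U t x y -> 0 < s ->
  (forall c c' K', word_le K' K -> s * Rabs (pd c (pd c' (applyZ K' u)) t x y) <= B) ->
  s * Rabs (applyZ K (pd a (pd b u)) t x y) <= 2 ^ length K * (2 ^ length K * B).
Proof.
  intros Hu H Hs HB.
  assert (HB' : forall c c' K', word_le K' K -> Rabs (pd c (pd c' (applyZ K' u)) t x y) <= B / s).
  { intros c c' K' HK'. apply (Rmult_le_reg_l s); [exact Hs|].
    replace (s * (B / s)) with B by (field; lra). auto. }
  assert (B0 : 0 <= B / s)
    by (eapply Rle_trans; [apply Rabs_pos | apply (HB' a b nil), word_le_nil]).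
  replace (2 ^ length K * (2 ^ length K * B)) with (s * (2 ^ length K * (2 ^ length K * (B / s))))
    by (field; lra).
  apply Rmult_le_compat_l; [lra|].
  apply (applyZ_pd_le nil K (pd b u) a); auto using regular_pd. intros c K' HK'.
  change (Rabs (applyZ ((Pd c :: nil) ++ K') (pd b u) t x y) <= 2 ^ length K * (B / s)).
  eapply Rle_trans.
  - apply applyZ_pd_le; auto. intros c' K'' HK''. apply HB'.
    destruct HK', HK''. split; lia.
  - apply Rmult_le_compat_r; [exact B0|]. apply Rle_pow; [lra | apply HK'].
Qed.

Lemma weighted_hessian_applyZ_le p k u K t x y : regular U u -> U t x y -> 0 < t ->
  x ^ 2 + y ^ 2 <= t ^ 2 -> (length K <= p)%nat -> (nboost K <= k)%nat ->
  forall a b, (1 - (x / t) ^ 2 - (y / t) ^ 2) * Rabs (pd a (pd b (applyZ K u)) t x y)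
    <= norm_pk p k (box u) t x y + 18 * 2 ^ p * / t * norm_d_pk (p + 1) (k + 1) u t x y.
Proof.
  intros Hu H Ht Hr Hl Hb a b.
  set (N := norm_d_pk (p + 1) (k + 1) u t x y).
  assert (N0 : 0 <= N) by apply maxR_nonneg.
  eapply Rle_trans.
  - apply (weighted_hessian_le_boost (applyZ K u) t x y (3 * 2 ^ p * N));
      auto using regular_applyZ.
    intros a' b'. eapply Rle_trans.
    + apply boost_pd_applyZ_le with (B := N); auto.
      intros c K' [Hl' Hb']. change (nboost (Bst a' :: K)) with (S (nboost K)) in Hb'.
      simpl length in Hl'. apply norm_d_pk_ge; lia.
    + apply Rmult_le_compat_r; [exact N0|].
      apply Rmult_le_compat_l; [lra | apply Rle_pow; [lra | exact Hl]].
  - rewrite <- (box_applyZ K u Hu t x y H).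
    pose proof (norm_pk_ge p k (box u) t x y K Hl Hb).
    replace (6 * (3 * 2 ^ p * N / t)) with (18 * 2 ^ p * / t * N) by (field; lra).
    lra.
Qed.

Lemma weighted_norm_dd_pk_le p k u t x y s B : regular U u -> U t x y -> 0 < s ->
  (forall K a b, (length K <= p)%nat -> (nboost K <= k)%nat ->
     s * Rabs (pd a (pd b (applyZ K u)) t x y) <= B) ->
  s * norm_dd_pk p k u t x y <= 2 ^ p * (2 ^ p * B).
Proof.
  intros Hu H Hs HB.
  assert (B0 : 0 <= B).
  { eapply Rle_trans; [|apply (HB nil Dt Dt); apply Nat.le_0_l].
    apply Rmult_le_pos; [lra | apply Rabs_pos]. }
  assert (0 <= 2 ^ p) by (apply pow_le; lra).
  apply norm_dd_pk_scale_le; [lra | repeat apply Rmult_le_pos; lra |].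
  intros a b K Hl Hb. eapply Rle_trans.
  - apply applyZ_pd2_le; auto. intros c c' K' [Hl' Hb']. apply HB; lia.
  - assert (2 ^ length K <= 2 ^ p) by (apply Rle_pow; [lra | exact Hl]).
    assert (0 <= 2 ^ length K) by (apply pow_le; lra).
    apply Rmult_le_compat; [lra | nra | lra | apply Rmult_le_compat_r; lra].
Qed.

End OpenSet.

Lemma inK_weight s0 s1 t x y : inK s0 s1 t x y ->
  1 < t /\ x ^ 2 + y ^ 2 <= t ^ 2 /\ 0 < 1 - (x / t) ^ 2 - (y / t) ^ 2 /\
  (hyp_s t x y / t) ^ 2 = 1 - (x / t) ^ 2 - (y / t) ^ 2.
Proof.
  intros [Ht _]. unfold rad in Ht. pose proof (sqrt_pos (x ^ 2 + y ^ 2)).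
  assert (sqrt (x ^ 2 + y ^ 2) ^ 2 = x ^ 2 + y ^ 2) by (apply pow2_sqrt; nra).
  assert (E : 1 - (x / t) ^ 2 - (y / t) ^ 2 = (t ^ 2 - x ^ 2 - y ^ 2) / t ^ 2) by (field; lra).
  repeat split; [lra | nra | rewrite E; apply Rdiv_lt_0_compat; nra |].
  unfold hyp_s, Rdiv. rewrite !Rpow_mult_distr, pow2_sqrt by nra. field. lra.
Qed.

Lemma absorb_constant q P M : 1 <= q -> 0 <= P -> 0 <= M ->
  P + 18 * q * M <= q * q * (1 + 18 * q) * P + q * q * (1 + 18 * q) * M /\
  q * (q * (P + 18 * q * M)) <= q * q * (1 + 18 * q) * P + q * q * (1 + 18 * q) * M.
Proof.
  intros Hq HP HM.
  assert (1 <= q * q) by nra.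
  assert (0 <= (q * q - 1) * P) by (apply Rmult_le_pos; lra).
  assert (0 <= q * q * q * P) by (repeat apply Rmult_le_pos; lra).
  assert (0 <= q * q * M) by (apply Rmult_le_pos; lra).
  assert (0 <= q * M * (q * q - 1)) by (repeat apply Rmult_le_pos; lra).
  split; lra.
Qed.

Theorem lemma7p1 :
  forall p : nat, exists C : R, 0 < C /\
  forall (s0 s1 : R) (U : R -> R -> R -> Prop) (u : fn3),
    open3 U ->
    (forall t x y, inK s0 s1 t x y -> U t x y) ->
    smooth_on U u ->
    forall (k : nat) (K : list vf),
      (k <= p)%nat -> nboost K = k -> nder K = (p - k)%nat ->
      forall t x y, inK s0 s1 t x y ->
        (forall a b : dir,
           (hyp_s t x y / t) ^ 2 * Rabs (pd a (pd b (applyZ K u)) t x y)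
           <= C * norm_pk p k (box u) t x y
              + C * / t * norm_d_pk (p + 1) (k + 1) u t x y) /\
        (hyp_s t x y / t) ^ 2 * norm_dd_pk p k u t x y
           <= C * norm_pk p k (box u) t x y
              + C * / t * norm_d_pk (p + 1) (k + 1) u t x y.
Proof.
  intros p. exists (2 ^ p * 2 ^ p * (1 + 18 * 2 ^ p)).
  assert (q1 : 1 <= 2 ^ p) by (apply pow_R1_Rle; lra). split; [nra|].
  intros s0 s1 U u HU HK Hs k K hk hb hd t x y Hin.
  assert (HlK : (length K <= p)%nat) by (rewrite length_nboost_nder; lia).
  assert (HbK : (nboost K <= k)%nat) by lia.
  pose proof (regular_of_smooth_on U HU u Hs) as Hu.
  destruct (inK_weight s0 s1 t x y Hin) as (Ht & Hr & Hs0 & ->).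
  assert (P0 : 0 <= norm_pk p k (box u) t x y) by apply maxR_nonneg.
  assert (N0 : 0 <= / t * norm_d_pk (p + 1) (k + 1) u t x y)
    by (apply Rmult_le_pos; [apply Rlt_le, Rinv_0_lt_compat; lra | apply maxR_nonneg]).
  destruct (absorb_constant _ _ _ q1 P0 N0) as [C1 C2].
  pose proof (weighted_hessian_applyZ_le U HU p k u) as core.
  split.
  - intros a b. eapply Rle_trans; [apply core; auto; lra | lra].
  - eapply Rle_trans.
    + apply (weighted_norm_dd_pk_le U HU p k u t x y); auto. intros; apply core; auto; lra.
    + lra.
Qed.
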